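(* Let $I$ be a set, $\mathcal{E}=(E_i)_{i\in I}$ a family of nonempty sets, $R$ a multiple relation in $\mathcal{E}$, and $J,K\subseteq J_R$ two subsets that are both detachable from $R$. Then $J\cup K$ is detachable from $R$.
   Context: For $J\subseteq I$, $Z_J=\prod_{j\in J}E_j$ ($Z_\emptyset=\{\bullet\}$). A multiple relation is $R=(J_R,G_R)$ with $J_R\subseteq I$, $G_R\subseteq Z_{J_R}$. For $K\subseteq J_R$, $R_{|K}=(K,\{x_{|K}:x\in G_R\})$. $1_J=(J,Z_J)$. Product: $R\bowtie S=(J_R\cup J_S,\{x\in Z_{J_R\cup J_S}: x_{|J_R}\in G_R,\ x_{|J_S}\in G_S\})$. For $J\subseteq J_R$ put $\neg J=J_R\setminus J$; $J$ is detachable from $R$ if $R=R_{|\neg J}\bowtie 1_J$. *)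

Set Implicit Arguments.

Section MultRel.
Variables (I : Type) (E : I -> Type).

Definition Z (J : I -> Prop) : Type := forall j : {i : I | J i}, E (proj1_sig j).

Record mrel : Type := MRel { JR : I -> Prop; GR : Z JR -> Prop }.

Definition restr (J K : I -> Prop) (h : forall i, K i -> J i) (x : Z J) : Z K :=
  fun k => x (exist J (proj1_sig k) (h (proj1_sig k) (proj2_sig k))).

Definition mrestr (R : mrel) (K : I -> Prop) (h : forall i, K i -> JR R i) : mrel :=
  @MRel K (fun y => exists x, GR R x /\ @restr (JR R) K h x = y).

Definition one (J : I -> Prop) : mrel := @MRel J (fun _ => True).

Definition setU (A B : I -> Prop) : I -> Prop := fun i => A i \/ B i.

Definition mprod (R S : mrel) : mrel :=
  @MRel (setU (JR R) (JR S))
    (fun x => GR R (@restr (setU (JR R) (JR S)) (JR R) (fun i h => or_introl h) x)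
           /\ GR S (@restr (setU (JR R) (JR S)) (JR S) (fun i h => or_intror h) x)).

Definition negJ (R : mrel) (J : I -> Prop) : I -> Prop := fun i => JR R i /\ ~ J i.

Definition negJ_sub (R : mrel) (J : I -> Prop) : forall i, negJ R J i -> JR R i :=
  fun i h => proj1 h.

(* J is detachable from R if R = R_{|¬J} ⋈ 1_J (literal equality of multiple relations) *)
Definition detachable (R : mrel) (J : I -> Prop) : Prop :=
  R = mprod (@mrestr R (negJ R J) (@negJ_sub R J)) (one J).

End MultRel.

From Stdlib Require Import Classical FunctionalExtensionality PropExtensionality
  ProofIrrelevance ClassicalDescription.

Set Implicit Arguments.

(* [L] is detachable from [R] exactly when [G_R] is invariant under arbitrary
   changes of the coordinates indexed by [L].  These invariances compose: if [x]
   and [y] agree off [J ∪ K], copying the [J]-coordinates of [y] into [x] is a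
   [J]-change, and what then remains to change lies in [K]. *)

Section Detachable.
Variables (I : Type) (E : I -> Type).

Lemma eq_rect_Z_apply (P Q : I -> Prop) (e : P = Q) (x : Z E P) {i} (p : P i) (q : Q i) :
  eq_rect P (Z E) x Q e (exist Q i q) = x (exist P i p).
Proof. subst Q; simpl; now rewrite (proof_irrelevance _ q p). Qed.

Lemma GR_eq_rect (R S : mrel E) (e : R = S) (x : Z E (JR R)) :
  GR R x <-> GR S (eq_rect _ (Z E) x _ (f_equal (@JR I E) e)).
Proof. now destruct e. Qed.

Lemma MRel_ext (P Q : I -> Prop) (e : P = Q) (G : Z E P -> Prop) (G' : Z E Q -> Prop) :
  (forall x, G x <-> G' (eq_rect _ (Z E) x _ e)) -> MRel G = MRel G'.
Proof.
  subst Q; simpl; intro HG; f_equal.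
  apply functional_extensionality; intro x.
  now apply propositional_extensionality.
Qed.

Definition agree_off (P L : I -> Prop) (x y : Z E P) : Prop :=
  forall i (p : P i), ~ L i -> x (exist P i p) = y (exist P i p).

Definition saturated (R : mrel E) (L : I -> Prop) : Prop :=
  forall x y, agree_off L x y -> GR R x -> GR R y.

Lemma negJ_setU {R : mrel E} {L : I -> Prop} :
  (forall i, L i -> JR R i) -> JR R = setU (negJ R L) L.
Proof.
  intro hL; apply functional_extensionality; intro i.
  apply propositional_extensionality; unfold setU, negJ.
  split.
  - intro p; destruct (classic (L i)); [right | left]; tauto.
  - intros [[p _] | l]; auto.
Qed.

Lemma detachable_saturated (R : mrel E) (L : I -> Prop) :
  detachable R L -> saturated R L.
Proof.
  intros dL x y xy Gx.
  apply (proj2 (GR_eq_rect dL y)); simpl; split; [| exact Logic.I].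
  exists x; split; [exact Gx |].
  apply functional_extensionality_dep; intros [i [p nl]]; unfold restr; simpl.
  rewrite (eq_rect_Z_apply (f_equal (@JR I E) dL) y p), (proof_irrelevance _ (negJ_sub _) p).
  exact (xy i p nl).
Qed.

Lemma saturated_detachable (R : mrel E) (L : I -> Prop) :
  (forall i, L i -> JR R i) -> saturated R L -> detachable R L.
Proof.
  intros hL satL; unfold detachable.
  pose proof (negJ_setU hL) as e.
  destruct R as [P G]; simpl in *.
  apply (MRel_ext e); intro x; simpl; split.
  - intro Gx; split; [| exact Logic.I].
    exists x; split; [exact Gx |].
    apply functional_extensionality_dep; intros [i [p nl]]; unfold restr; simpl.
    rewrite (eq_rect_Z_apply e x p), (proof_irrelevance _ (negJ_sub _) p).
    reflexivity.
  - intros [[x' [Gx' x'x]] _]; apply (satL x'); [| exact Gx'].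
    intros i p nl.
    pose proof (f_equal (fun f => f (exist _ i (conj p nl))) x'x) as x'x_i.
    unfold restr in x'x_i; simpl in x'x_i.
    rewrite (eq_rect_Z_apply e x p) in x'x_i.
    match type of x'x_i with x' (exist _ _ ?q) = _ => now rewrite (proof_irrelevance _ q p) in x'x_i end.
Qed.

Definition patch (P L : I -> Prop) (x y : Z E P) : Z E P :=
  fun j => if excluded_middle_informative (L (proj1_sig j)) then y j else x j.

Lemma saturated_setU (R : mrel E) (J K : I -> Prop) :
  saturated R J -> saturated R K -> saturated R (setU J K).
Proof.
  intros satJ satK x y xy Gx.
  set (z := patch J x y).
  assert (Gz : GR R z).
  { apply (satJ x); [| exact Gx]; intros i p nj; unfold z, patch; simpl.
    now destruct (excluded_middle_informative (J i)). }
  apply (satK z); [| exact Gz]; intros i p nk; unfold z, patch; simpl.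
  destruct (excluded_middle_informative (J i)); [reflexivity |].
  apply xy; unfold setU; tauto.
Qed.

End Detachable.

Theorem mainTheorem3 (I : Type) (E : I -> Type)
  (hE : forall i, inhabited (E i))
  (R : mrel E) (J K : I -> Prop)
  (hJ : forall i, J i -> JR R i) (hK : forall i, K i -> JR R i) :
  detachable R J -> detachable R K -> detachable R (setU J K).
Proof.
  intros dJ dK.
  apply saturated_detachable.
  - intros i [j | k]; auto.
  - apply saturated_setU; apply detachable_saturated; assumption.
Qed.
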